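(* Let $n\geq5$ be a prime. For $i,j\in[n]$ (not necessarily distinct) write $\langle v_i,v_j\rangle^{\downarrow}=(v_{\max\{i,j\}},v_{\min\{i,j\}})$ and $\langle v_i,v_j\rangle^{\uparrow}=(v_{\min\{i,j\}},v_{\max\{i,j\}})$, and let $\langle a\rangle_n=a \bmod n$. For $h\in[n-2]$ and $m\in[n]$ define the edge sets $$S^{\downarrow}_h=\{\langle v_h,v_\ell\rangle^{\downarrow}\mid \ell\in[n-1]\},\qquad S^{\uparrow}_h=\{\langle v_h,v_\ell\rangle^{\uparrow}\mid \ell\in[n]\setminus\{n-2\}\},$$ $$D^{\downarrow}_m=\{\langle v_k,v_\ell\rangle^{\downarrow}\mid k,\ell\in[n]\setminus\{n-2\},\ \langle k+\ell\rangle_n=m\}\cup\{(v_{n-1},v_{n-2})\},$$ $$D^{\uparrow}_m=\{\langle v_k,v_\ell\rangle^{\uparrow}\mid k,\ell\in[n-1],\ \langle k+\ell\rangle_n=m\}\cup\{(v_{n-2},v_{n-1})\}.$$ Let $\mathcal{C}_{{\cal G}_4}$ be the set of all binary graphs $G=(V_n,L)$ such that, over $\mathbb{F}_2$, (a) $\sum_{e\in S^{\downarrow}_h}L(e)=0$ for all $h\in[n-2]$; (b) $\sum_{e\in D^{\downarrow}_m}L(e)=0$ for all $m\in[n]$; (c) $\sum_{e\in S^{\uparrow}_h}L(e)=0$ for all $h\in[n-2]$; (d) $\sum_{e\in D^{\uparrow}_m}L(e)=0$ for all $m\in[n]$. Then $\mathcal{C}_{{\cal G}_4}$ is an optimal binary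 double-node-erasure-correcting code, i.e., it corrects the failure of any two nodes and its redundancy equals $n^2-(n-2)^2=4n-4$.
   Context: $[n]=\{0,\ldots,n-1\}$, $V_n=\{v_0,\ldots,v_{n-1}\}$. A binary graph $G=(V_n,L)$ is a complete directed graph with self loops (edge set $V_n\times V_n$) with labeling $L:V_n\times V_n\to\{0,1\}$. A code over graphs is a set of such graphs; its dimension $k_{\cal G}$ is $\log_2$ of its size and its redundancy is $n^2-k_{\cal G}$. A failure of node $i$ is the erasure of the labels of all edges $(v_i,v_j)$ and $(v_j,v_i)$, $j\in[n]$, with the failed node known. A code is $\rho$-node-erasure-correcting if for every graph in it and every set of $\rho$ failed nodes the erased labels are uniquely determined; any such code has redundancy at least $n^2-(n-\rho)^2$, and it is called optimal if it attains this bound with equality. Double-node-erasure-correcting means $\rho=2$. *)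

From mathcomp Require Import all_boot.
Set Implicit Arguments. Unset Strict Implicit. Unset Printing Implicit Defensive.

(* Binary graph on V_n = 'I_n: a labeling of all ordered pairs (edges with self loops). *)
Definition labeling (n : nat) := {ffun 'I_n * 'I_n -> bool}.

Definition is_edge n (e : 'I_n * 'I_n) (i j : nat) : bool :=
  (val e.1 == i) && (val e.2 == j).

Definition is_down n (e : 'I_n * 'I_n) (i j : nat) := is_edge e (maxn i j) (minn i j).
Definition is_up n (e : 'I_n * 'I_n) (i j : nat) := is_edge e (minn i j) (maxn i j).

Definition S_down n (h : nat) : {set 'I_n * 'I_n} :=
  [set e | [exists l : 'I_n, (l < n - 1) && is_down e h l]].
Definition S_up n (h : nat) : {set 'I_n * 'I_n} :=
  [set e | [exists l : 'I_n, (val l != n - 2) && is_up e h l]].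
Definition D_down n (m : nat) : {set 'I_n * 'I_n} :=
  [set e | [exists k : 'I_n, exists l : 'I_n,
     [&& val k != n - 2, val l != n - 2, (k + l) %% n == m & is_down e k l]]]
  :|: [set e | is_edge e (n - 1) (n - 2)].
Definition D_up n (m : nat) : {set 'I_n * 'I_n} :=
  [set e | [exists k : 'I_n, exists l : 'I_n,
     [&& k < n - 1, l < n - 1, (k + l) %% n == m & is_up e k l]]]
  :|: [set e | is_edge e (n - 2) (n - 1)].

Definition parity n (L : labeling n) (S : {set 'I_n * 'I_n}) : bool :=
  \big[addb/false]_(e in S) L e.

Definition code_G4 (n : nat) : {set labeling n} :=
  [set L : labeling n |
    [&& [forall h : 'I_n, (h < n - 2) ==> ~~ parity L (S_down n h)],
        [forall m : 'I_n, ~~ parity L (D_down n m)],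
        [forall h : 'I_n, (h < n - 2) ==> ~~ parity L (S_up n h)] &
        [forall m : 'I_n, ~~ parity L (D_up n m)]]].

(* rho-node-erasure-correcting: for every graph in the code and every set F of
   rho failed nodes, the labels of all edges touching F are determined by the
   remaining labels, i.e. two codewords agreeing outside F coincide. *)
Definition node_erasure_correcting n (C : {set labeling n}) (rho : nat) : Prop :=
  forall (L1 L2 : labeling n) (F : {set 'I_n}),
    L1 \in C -> L2 \in C -> #|F| = rho ->
    (forall e : 'I_n * 'I_n, e.1 \notin F -> e.2 \notin F -> L1 e = L2 e) ->
    L1 = L2.

(* redundancy r = n^2 - log2 |C| ; stated as |C| = 2^(n^2 - r) *)
Definition has_redundancy n (C : {set labeling n}) (r : nat) : Prop :=
  #|C| = 2 ^ (n ^ 2 - r).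

Definition optimal_node_erasure_code n (C : {set labeling n}) (rho : nat) : Prop :=
  node_erasure_correcting C rho /\ has_redundancy C (n ^ 2 - (n - rho) ^ 2).

From mathcomp Require Import all_boot zify.
Set Implicit Arguments. Unset Strict Implicit. Unset Printing Implicit Defensive.

(* The code is linear, so it suffices to show that a codeword Z vanishing off the
   rows and columns of two nodes i < j is zero.  The labels below and above the
   diagonal form symmetric weights X k l = Z (max k l, min k l) and
   Y k l = Z (min k l, max k l): (a), (b) are row checks over the regular rows
   h < n - 2 and wrapped anti-diagonal checks k + l = m (mod n) for X, (c), (d) are
   the same checks for Y with the special nodes n - 2 and n - 1 exchanged, and X, Y
   share the diagonal.  If i or j is special, the checks clear X and Y directly.
   If both are regular, put d = j - i: the anti-diagonal check gives
   w i (y + d) = w j y and the row check of a regular y gives w j y = w i y.  As n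
   is prime, y + k d runs over all nodes, and this zigzag, started at the special
   node b, clears w i i or w j j according as i comes before or after the other
   special node a.  Exchanging a and b between X and Y yields both, and then the
   zigzag clears everything.
   Counting: the 4n - 4 checks are injective, hence bijective, on labelings
   supported on the 4n - 4 edges touching two fixed nodes, so each labeling of the
   other (n - 2)^2 edges extends to exactly one codeword. *)

Lemma big_addb_seq (T : finType) (P : pred T) (F : T -> bool) (s : seq T) :
  uniq s -> (forall x, P x -> F x -> x \in s) ->
  \big[addb/false]_(x | P x) F x = \big[addb/false]_(x <- s) (P x && F x).
Proof.
move=> s_uniq s_supp; rewrite big_mkcond [RHS]big_uniq //= [RHS]big_mkcond /=.
apply: eq_bigr => x _; case: (P x) (s_supp x) => /=; last by case: ifP.
by case: (F x); case: (x \in s) => // /(_ isT isT).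
Qed.

Lemma addb_false_eq (x y : bool) : x (+) y = false -> x = y.
Proof. by case: x; case: y. Qed.

Definition xorf (T : finType) (f g : {ffun T -> bool}) : {ffun T -> bool} :=
  [ffun t => f t (+) g t].

Lemma xorf_eq0 (T : finType) (f g : {ffun T -> bool}) : xorf f g = [ffun=> false] -> f = g.
Proof.
by move/ffunP=> fg; apply/ffunP => t; have := fg t; rewrite !ffunE => /addb_false_eq.
Qed.

Lemma pffun_on_boolP (T : finType) (D : {pred T}) (f : {ffun T -> bool}) :
  reflect (forall t, t \notin D -> f t = false) (f \in pffun_on false D [set: bool]).
Proof.
apply: (iffP pffun_onP) => [[supp _] t | f0].
  by apply: contraNF => ft; apply: (subsetP supp); rewrite inE ft.
split; last by move=> b; rewrite inE.
by apply/subsetP => t; rewrite inE; apply: contraNT => /f0->.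
Qed.

Section LinearCode.
Variables (T I : finType) (syn : {ffun T -> bool} -> {ffun I -> bool}) (E : {set T}).
Hypothesis syn_xor : forall f g, syn (xorf f g) = xorf (syn f) (syn g).
Hypothesis E_correctable : forall f, syn f = [ffun=> false] ->
  (forall t, t \notin E -> f t = false) -> f = [ffun=> false].
Hypothesis card_E : #|E| = #|I|.

Let eq_syn f g : syn f = syn g -> (forall t, t \notin E -> f t = g t) -> f = g.
Proof.
move=> sfg fg; apply: xorf_eq0; apply: E_correctable => [|t tE].
  by rewrite syn_xor sfg; apply/ffunP => i; rewrite !ffunE addbb.
by rewrite ffunE fg // addbb.
Qed.

Let syn_onto s : exists2 f, f \in pffun_on false E [set: bool] & syn f = s.
Proof.
have syn_inj : {in pffun_on false E [set: bool] &, injective syn}.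
  move=> f g /pffun_on_boolP f0 /pffun_on_boolP g0 sfg.
  by apply: eq_syn => // t tE; rewrite f0 // g0.
have : s \in syn @: pffun_on false E [set: bool].
  suff -> : syn @: pffun_on false E [set: bool] = [set: {ffun I -> bool}] by rewrite inE.
  apply/eqP; rewrite eqEcard subsetT cardsT (card_in_imset syn_inj).
  by rewrite card_pffun_on card_ffun card_E cardsT leqnn.
by case/imsetP=> f fE ->; exists f.
Qed.

Lemma card_kernel : #|[set f | syn f == [ffun=> false]]| = 2 ^ #|~: E|.
Proof.
pose res (f : {ffun T -> bool}) := [ffun t => (t \notin E) && f t].
have res_inj : {in [set f | syn f == [ffun=> false]] &, injective res}.
  move=> f g; rewrite !inE => /eqP sf /eqP sg /ffunP rfg.
  by apply: eq_syn => [|t tE]; [rewrite sf sg | have := rfg t; rewrite !ffunE tE].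
have -> : 2 ^ #|~: E| = #|pffun_on false (~: E) [set: bool]|.
  by rewrite card_pffun_on cardsT card_bool.
rewrite -(card_in_imset res_inj); apply: eq_card => u.
apply/imsetP/idP => [[f _ ->] | /pffun_on_boolP u0].
  by apply/pffun_on_boolP => t; rewrite inE negbK ffunE => ->.
have [v /pffun_on_boolP v0 svu] := syn_onto (syn u).
exists (xorf u v).
  by rewrite inE syn_xor svu; apply/eqP/ffunP => i; rewrite !ffunE addbb.
apply/ffunP => t; rewrite !ffunE; case: (boolP (t \in E)) => [tE | tE] /=.
  by rewrite u0 // inE negbK.
by rewrite v0 // addbF.
Qed.

End LinearCode.

Lemma modn_addl_inj n x y y' : y < n -> y' < n -> x + y = x + y' %[mod n] -> y = y'.
Proof. by move=> yn y'n /eqP; rewrite eqn_modDl !modn_small // => /eqP. Qed.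

Lemma exists_modn_partner n x z : z < n -> exists2 y, y < n & x = z + y %[mod n].
Proof.
move=> zn; exists ((x + (n - z)) %% n); first by rewrite ltn_pmod //; lia.
by rewrite modnDmr addnCA subnKC ?modnDr // ltnW.
Qed.

Lemma zigzag_fwd (u v : nat -> bool) K :
  u 0 = false -> (forall k, u k.+1 = v k) -> (forall k, k < K -> u k = v k) ->
  forall k, k <= K -> u k = false.
Proof. by move=> u0 uv eq_uv; elim=> // k IH lt_kK; rewrite uv -eq_uv ?IH // ltnW. Qed.

Lemma zigzag_bwd (u v : nat -> bool) K N :
  u N = false -> (forall k, u k.+1 = v k) -> (forall k, K < k < N -> u k = v k) ->
  forall k, K <= k < N -> v k = false.
Proof.
move=> uN uv eq_uv k; rewrite -uv; move Ed : (N - k.+1) => d.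
elim: d k Ed => [|d IH] k Ed /andP[Kk kN]; first by have -> : k.+1 = N by lia.
by rewrite eq_uv -?uv; [apply: IH | ..]; lia.
Qed.

Definition aprog n c d k := (c + k * d) %% n.

Section ArithmeticProgression.
Variables (n c d : nat).
Hypotheses (n_prime : prime n) (d_gt0 : 0 < d) (d_lt : d < n).

Lemma aprogS k : aprog n c d k.+1 = (aprog n c d k + d) %% n.
Proof. by rewrite /aprog modnDml mulSnr addnA. Qed.

Lemma aprog_lt k : aprog n c d k < n.
Proof. by rewrite ltn_pmod // prime_gt0. Qed.

Lemma aprog0 : c < n -> aprog n c d 0 = c.
Proof. by move=> cn; rewrite /aprog addn0 modn_small. Qed.

Lemma aprogn : c < n -> aprog n c d n = c.
Proof. by move=> cn; rewrite /aprog addnC mulnC modnMDl modn_small. Qed.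

Lemma aprogD k t : aprog n c d (k + t) = aprog n (aprog n c d t) d k.
Proof. by rewrite /aprog modnDml mulnDl [k * d + _]addnC addnA. Qed.

Lemma aprog_inj k k' : k < n -> k' < n -> aprog n c d k = aprog n c d k' -> k = k'.
Proof.
wlog le_kk' : k k' / k <= k'.
  by move=> H kn k'n; case: (leqP k k') => [|/ltnW] le; [exact: H | move/esym/H->].
move=> _ k'n /eqP; rewrite /aprog -(subnKC le_kk') mulnDl addnA -{1}[c + _]addn0.
rewrite eqn_modDl mod0n eq_sym -/(n %| _) Euclid_dvdM //.
have [->|t_gt0] := posnP (k' - k); first by rewrite addn0.
by rewrite !gtnNdvd //; lia.
Qed.

Lemma aprog_onto y : y < n -> exists2 k, k < n & aprog n c d k = y.
Proof.
move=> yn; pose f (k : 'I_n) : 'I_n := Ordinal (aprog_lt k).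
have f_inj : injective f.
  by move=> k k' /(congr1 val) /aprog_inj eq_kk'; apply/val_inj/eq_kk'.
have /codomP[k /(congr1 val) /= ->] := inj_card_onto f_inj (leqnn _) (Ordinal yn).
by exists k.
Qed.

End ArithmeticProgression.

Definition supported_on n (w : nat -> nat -> bool) (i j : nat) :=
  forall k l, k < n -> l < n -> w k l -> [|| k == i, k == j, l == i | l == j].

Definition vanishes n (w : nat -> nat -> bool) :=
  forall k l, k < n -> l < n -> w k l = false.

Definition row_sum n a (w : nat -> nat -> bool) h :=
  \big[addb/false]_(l < n | l != a :> nat) w h l.

Definition diag_pairs n b m : {set 'I_n * 'I_n} :=
  [set kl : 'I_n * 'I_n |
    [&& kl.1 <= kl.2, kl.1 != b :> nat, kl.2 != b :> nat & (kl.1 + kl.2) %% n == m]].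

Definition diag_sum n b (w : nat -> nat -> bool) m :=
  \big[addb/false]_(kl in diag_pairs n b m) w kl.1 kl.2.

(* Conditions (a), (b) say that the labels below the diagonal form a weight with
   [checks n (n - 1) (n - 2)], and (c), (d) that those above it form one with
   [checks n (n - 2) (n - 1)]; see [code_checks]. *)
Definition checks n a b (w : nat -> nat -> bool) :=
  [/\ 2 < n, (a == n - 2) && (b == n - 1) || (a == n - 1) && (b == n - 2),
      forall k l, w k l = w l k,
      forall h, h < n - 2 -> row_sum n a w h = false &
      forall m, m < n -> diag_sum n b w m = w a b].

Section CheckedWeights.
Variables (n a b : nat) (w : nat -> nat -> bool).
Hypothesis w_checks : checks n a b w.

Let n_gt2 : 2 < n. Proof. by case: w_checks. Qed.
Let ab_special : (a == n - 2) && (b == n - 1) || (a == n - 1) && (b == n - 2).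
Proof. by case: w_checks. Qed.
Let w_sym : forall k l, w k l = w l k. Proof. by case: w_checks. Qed.
Let rows_vanish : forall h, h < n - 2 -> row_sum n a w h = false.
Proof. by case: w_checks. Qed.
Let diags_vanish : forall m, m < n -> diag_sum n b w m = w a b.
Proof. by case: w_checks. Qed.

Lemma row_sum_pair h u v : h < n - 2 -> u < n -> v < n -> u != v ->
    (forall l, l < n -> l != u -> l != v -> l != a -> w h l = false) ->
  (u != a) && w h u = (v != a) && w h v.
Proof.
move=> h_reg un vn uv out; apply: addb_false_eq.
rewrite -(rows_vanish h_reg) /row_sum (big_addb_seq (s := [:: Ordinal un; Ordinal vn])).
- by rewrite !big_cons big_nil addbF.
- by rewrite /= inE -val_eqE /= andbT.
move=> l la; apply: contraTT => /=; rewrite !inE -!val_eqE /= => /norP[lu lv].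
by rewrite out.
Qed.

Lemma row_vanish_at_b h : h < n - 2 ->
  (forall l, l < n -> l != a -> l != b -> w h l = false) -> w h b = false.
Proof.
move=> h_reg out; have bn : b < n by lia. have an : a < n by lia. have ba : b != a by lia.
have := row_sum_pair h_reg bn an ba; rewrite ba eqxx /=; apply=> l ln lb _ la.
exact: out.
Qed.

Lemma diag_pair_minmax k l (mn : minn k l < n) (Mn : maxn k l < n) m :
  ((Ordinal mn, Ordinal Mn) \in diag_pairs n b m) && w (minn k l) (maxn k l)
  = [&& k != b, l != b, (k + l) %% n == m & w k l].
Proof.
rewrite inE /= addn_min_max.
case: (leqP k l) => kl; first by rewrite kl -!andbA.
by rewrite (ltnW kl) w_sym -!andbA; case: (k != b); case: (l != b).
Qed.

Section Support.
Variables i j : nat.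
Hypotheses (supp : supported_on n w i j) (i_lt : i < n) (j_lt : j < n) (i_neq_j : i != j).

Lemma row_support_eq h : h < n - 2 -> h != i -> h != j ->
  (i != a) && w h i = (j != a) && w h j.
Proof.
move=> h_reg hi hj; have hn : h < n by lia.
apply: row_sum_pair => // l ln li lj _.
by apply/negP => /(supp hn ln); lia.
Qed.

Lemma supported_vanish :
  (forall l, l < n -> w i l = false) -> (forall l, l < n -> w j l = false) -> vanishes n w.
Proof.
move=> wi wj k l kn ln; apply/negP => wkl.
case/or4P: (supp kn ln wkl) => /eqP e; move: wkl; rewrite e.
- by rewrite wi.
- by rewrite wj.
- by rewrite w_sym wi.
- by rewrite w_sym wj.
Qed.

Lemma diag_partner k l l1 l2 : k < n -> l < n -> l1 < n -> l2 < n ->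
    k + l = i + l1 %[mod n] -> j + l2 = i + l1 %[mod n] -> w k l ->
  ((minn k l, maxn k l) == (minn i l1, maxn i l1)) ||
  ((minn k l, maxn k l) == (minn j l2, maxn j l2)).
Proof.
move=> kn ln l1n l2n ekl ej wkl.
case/or4P: (supp kn ln wkl) => /eqP e; rewrite e in ekl *.
- by rewrite (modn_addl_inj ln l1n ekl) eqxx.
- by rewrite (modn_addl_inj ln l2n (etrans ekl (esym ej))) eqxx orbT.
- by rewrite addnC in ekl; rewrite (modn_addl_inj kn l1n ekl) minnC maxnC eqxx.
rewrite addnC in ekl.
by rewrite (modn_addl_inj kn l2n (etrans ekl (esym ej))) minnC maxnC eqxx orbT.
Qed.

Lemma diag_check_two l1 l2 : l1 < n -> l2 < n -> l1 != j -> i + l1 = j + l2 %[mod n] ->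
  [&& i != b, l1 != b & w i l1] (+) [&& j != b, l2 != b & w j l2] = w a b.
Proof.
move=> l1n l2n l1j e.
have m1 : minn i l1 < n by lia. have M1 : maxn i l1 < n by lia.
have m2 : minn j l2 < n by lia. have M2 : maxn j l2 < n by lia.
have mn : (i + l1) %% n < n by rewrite ltn_pmod //; lia.
rewrite -(diags_vanish mn).
rewrite /diag_sum.
rewrite (big_addb_seq (s := [:: (Ordinal m1, Ordinal M1); (Ordinal m2, Ordinal M2)])).
- by rewrite !big_cons big_nil addbF /= !diag_pair_minmax -e eqxx.
- by rewrite /= inE andbT xpair_eqE -!val_eqE /=; clear -i_neq_j l1j; lia.
case=> k l; rewrite inE /= => /and4P[kl _ _ /eqP ekl] wkl.
move: (diag_partner (ltn_ord k) (ltn_ord l) l1n l2n ekl (esym e) wkl).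
by rewrite (minn_idPl kl) (maxn_idPr kl) !inE !xpair_eqE -!val_eqE.
Qed.

Lemma diag_check_one : [&& i != b, j != b & w i j] = w a b.
Proof.
have m : minn i j < n by lia. have M : maxn i j < n by lia.
have e : j + i = i + j %[mod n] by rewrite addnC.
have mn : (i + j) %% n < n by rewrite ltn_pmod //; lia.
rewrite -(diags_vanish mn).
rewrite /diag_sum (big_addb_seq (s := [:: (Ordinal m, Ordinal M)])) //.
- by rewrite big_cons big_nil addbF /= diag_pair_minmax eqxx.
case=> k l; rewrite inE /= => /and4P[kl _ _ /eqP ekl] wkl.
move: (diag_partner (ltn_ord k) (ltn_ord l) j_lt i_lt ekl e wkl).
rewrite (minn_idPl kl) (maxn_idPr kl) !inE !xpair_eqE -!val_eqE /=.
by rewrite [minn j i]minnC [maxn j i]maxnC orbb.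
Qed.

End Support.

Lemma supported_b_diag o : o < n -> o != b -> supported_on n w o b ->
  forall k l, k < n -> l < n -> w k l -> (k == b) && (l == b).
Proof.
move=> on ob supp; have bn : b < n by lia.
have wab : w a b = false by rewrite -(diag_check_one supp on bn ob) eqxx andbF.
have w_o l : l < n -> l != b -> w o l = false.
  move=> ln lb; have [l2 l2n e] := exists_modn_partner (o + l) bn.
  by have := diag_check_two supp on bn ob ln l2n lb e; rewrite ob lb eqxx /= addbF wab.
have w_ob : w o b = false.
  case: (ltnP o (n - 2)) => [o_reg | o_sp]; last by have -> : o = a by lia.
  by apply: (row_vanish_at_b o_reg) => l ln _ lb; apply: w_o.
have w_b l : l < n -> l != b -> w b l = false.
  move=> ln lb; case: (eqVneq l o) => [-> | lo]; first by rewrite w_sym.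
  case: (eqVneq l a) => [-> | la]; first by rewrite w_sym.
  have l_reg : l < n - 2 by lia.
  have ba : b != a by lia.
  have := row_support_eq supp on bn ob l_reg lo lb.
  by rewrite [w l o]w_sym w_o // andbF ba [w l b]w_sym => /esym.
move=> k l kn ln wkl.
have w_o' l' : l' < n -> w o l' = false.
  by move=> l'n; case: (eqVneq l' b) => [-> | l'b]; [exact: w_ob | exact: w_o].
case/or4P: (supp k l kn ln wkl) => /eqP e; move: wkl; rewrite e.
- by rewrite w_o'.
- by rewrite eqxx; apply: contraTT => lb; rewrite w_b.
- by rewrite w_sym w_o'.
by rewrite eqxx andbT; apply: contraTT => kb; rewrite w_sym w_b.
Qed.

Lemma supported_a_vanish o :
  o < n - 2 -> supported_on n w o a -> w o o = false -> vanishes n w.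
Proof.
move=> o_reg supp woo.
have on : o < n by lia. have an : a < n by lia. have bn : b < n by lia.
have oa : o != a by lia. have ob : o != b by lia. have ab : a != b by lia.
have w_o_reg h : h < n - 2 -> w o h = false.
  move=> h_reg; case: (eqVneq h o) => [-> // | ho].
  have ha : h != a by lia.
  by have := row_support_eq supp on an oa h_reg ho ha; rewrite oa eqxx w_sym.
have w_o l : l < n -> l != a -> w o l = false.
  move=> ln la; case: (eqVneq l b) => [-> | lb]; last by apply: w_o_reg; lia.
  by apply: (row_vanish_at_b o_reg) => l' l'n l'a l'b; apply: w_o_reg; lia.
have diag_a y : y < n -> y != o -> (y != b) && w a y = w a b.
  move=> yn yo; have [l1 l1n e] := exists_modn_partner (a + y) on.
  have l1a : l1 != a.
    apply: contra_neq yo => l1a; rewrite l1a [o + a]addnC in e.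
    exact: (modn_addl_inj yn on e).
  have := diag_check_two supp on an oa l1n yn l1a (esym e).
  by rewrite w_o // !andbF ab.
have wab : w a b = false by rewrite -(diag_a b bn) ?eqxx // eq_sym.
have w_oa : w o a = false by rewrite -wab -(diag_check_one supp on an oa) ob ab.
apply: (supported_vanish supp) => l ln.
  by case: (eqVneq l a) => [-> // | la]; apply: w_o.
case: (eqVneq l o) => [-> | lo]; first by rewrite w_sym.
case: (eqVneq l b) => [-> // | lb].
by rewrite -wab -(diag_a l ln lo) lb.
Qed.

Section RegularPair.
Variables i j : nat.
Hypotheses (n_prime : prime n) (supp : supported_on n w i j).
Hypotheses (i_lt_j : i < j) (j_reg : j < n - 2).

(* Along x k = b + k (j - i) mod n let u k = w i (x k) and v k = w j (x k), both
   set to false where x k = b.  The anti-diagonal checks give u k.+1 = v k, and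
   the row checks give u k = v k unless x k is a, i or j. *)
Local Notation x := (aprog n b (j - i)).

Let i_lt : i < n. Proof. lia. Qed.
Let j_lt : j < n. Proof. lia. Qed.
Let i_neq_j : i != j. Proof. lia. Qed.
Let i_neq_b : i != b. Proof. lia. Qed.
Let j_neq_b : j != b. Proof. lia. Qed.
Let i_neq_a : i != a. Proof. lia. Qed.
Let j_neq_a : j != a. Proof. lia. Qed.
Let d_gt0 : 0 < j - i. Proof. lia. Qed.
Let d_lt : j - i < n. Proof. lia. Qed.

Let wab : w a b = false.
Proof. by apply/negP => /(supp _ _); lia. Qed.

Let wij : w i j = false.
Proof. by rewrite -wab -(diag_check_one supp i_lt j_lt i_neq_j) i_neq_b j_neq_b. Qed.

Let x_lt k : x k < n. Proof. exact: aprog_lt. Qed.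
Let x0 : x 0 = b. Proof. by rewrite aprog0 //; lia. Qed.
Let xn : x n = b. Proof. by rewrite aprogn //; lia. Qed.

Let x_neq k k' y : k < n -> k' < n -> x k' = y -> k != k' -> x k != y.
Proof. by move=> kn k'n <-; apply: contra_neq => /(aprog_inj n_prime d_gt0 d_lt kn k'n). Qed.

Let x_succ k : x k = i -> x k.+1 = j.
Proof. by move=> xi; rewrite aprogS xi subnKC ?modn_small // ltnW. Qed.

Let u k := (x k != b) && w i (x k).
Let v k := (x k != b) && w j (x k).

Let u0 : u 0 = false. Proof. by rewrite /u x0 eqxx. Qed.
Let un : u n = false. Proof. by rewrite /u xn eqxx. Qed.

Let uv_link k : u k.+1 = v k.
Proof.
rewrite /u /v; case: (eqVneq (x k) i) => [xi | xki].
  by rewrite x_succ // xi wij w_sym wij !andbF.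
have xk1j : x k.+1 != j.
  apply: contra_neq xki; rewrite aprogS => e.
  apply: (@modn_addl_inj n (j - i) _ _ (x_lt k) i_lt).
  by rewrite addnC e subnK ?modn_small // ltnW.
have e : i + x k.+1 = j + x k %[mod n].
  by rewrite aprogS modnDmr; congr (_ %% n); lia.
have := diag_check_two supp i_lt j_lt i_neq_j (x_lt _) (x_lt _) xk1j e.
by rewrite i_neq_b j_neq_b wab; apply: addb_false_eq.
Qed.

Let uv_row k : x k != a -> x k != i -> x k != j -> u k = v k.
Proof.
move=> xa xi xj; rewrite /u /v; case: (eqVneq (x k) b) => //= xb.
have x_reg : x k < n - 2 by have := x_lt k; lia.
have := row_support_eq supp i_lt j_lt i_neq_j x_reg xi xj.
by rewrite i_neq_a j_neq_a /= => e; rewrite w_sym e w_sym.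
Qed.

Lemma regular_diag_i ki ka : ka < n -> x ki = i -> x ka = a -> ki < ka -> w i i = false.
Proof.
move=> ka_n xi xa ki_ka.
have := zigzag_fwd u0 uv_link _ (leqnn ki); rewrite /u xi i_neq_b; apply=> k k_ki.
apply: uv_row; [apply: (x_neq _ _ xa) | apply: (x_neq _ _ xi) | apply: (x_neq _ _ (x_succ xi))];
  lia.
Qed.

Lemma regular_diag_j ki ka : ki < n -> x ki = i -> x ka = a -> ka < ki -> w j j = false.
Proof.
move=> ki_n xi xa ka_ki; have xj := x_succ xi.
have ki1_n : ki.+1 < n.
  rewrite ltn_neqAle ki_n andbT; apply/eqP => ki1; move: xj; rewrite ki1 xn; lia.
have := @zigzag_bwd u v ki.+1 n un uv_link _ ki.+1; rewrite /v xj j_neq_b leqnn ki1_n.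
apply=> // k /andP[lo hi].
apply: uv_row; [apply: (x_neq _ _ xa) | apply: (x_neq _ _ xi) | apply: (x_neq _ _ xj)].
all: lia.
Qed.

Lemma regular_vanish : w i i = false -> w j j = false -> vanishes n w.
Proof.
move=> wii wjj.
have [ka ka_n xa] : exists2 ka, ka < n & x ka = a by apply: aprog_onto; lia.
have uv k : k < n -> k != ka -> u k = v k.
  move=> kn kka; rewrite /u /v.
  case: (eqVneq (x k) i) => [-> | xki]; first by rewrite wii w_sym wij !andbF.
  case: (eqVneq (x k) j) => [-> | xkj]; first by rewrite wjj wij !andbF.
  by apply: uv_row => //; apply: (x_neq _ _ xa).
have u_lo k : k <= ka -> u k = false.
  by apply: zigzag_fwd u0 uv_link _ k => k' k'_ka; apply: uv; lia.
have v_hi k : ka <= k < n -> v k = false.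
  by apply: zigzag_bwd un uv_link _ k => k' /andP[? ?]; apply: uv; lia.
have w_ij y : y < n -> y != b -> w i y = false /\ w j y = false.
  move=> yn yb; have [k kn xk] := aprog_onto b n_prime d_gt0 d_lt yn.
  have : u k = false /\ v k = false.
    case: (ltngtP k ka) => [k_lt | k_gt | ->]; last by rewrite u_lo ?v_hi ?leqnn.
    - by rewrite -uv ?u_lo //; lia.
    - by rewrite uv ?v_hi //; lia.
  by rewrite /u /v xk yb.
have i_reg : i < n - 2 by lia.
have w_ib : w i b = false by apply: (row_vanish_at_b i_reg) => y yn _ yb; case: (w_ij y yn yb).
have w_jb : w j b = false by apply: (row_vanish_at_b j_reg) => y yn _ yb; case: (w_ij y yn yb).
by apply: (supported_vanish supp) => y yn; case: (eqVneq y b) => [-> // | yb];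
  case: (w_ij y yn yb).
Qed.

End RegularPair.

End CheckedWeights.

Section DualWeights.
Variables (n a b : nat) (w1 w2 : nat -> nat -> bool).
Hypotheses (w1_checks : checks n a b w1) (w2_checks : checks n b a w2).
Hypothesis diag_shared : forall k, w1 k k = w2 k k.

Let n_gt2 : 2 < n. Proof. by case: w1_checks. Qed.
Let ab_special : (a == n - 2) && (b == n - 1) || (a == n - 1) && (b == n - 2).
Proof. by case: w1_checks. Qed.

Lemma dual_special_vanish :
  supported_on n w1 a b -> supported_on n w2 b a -> vanishes n w1 /\ vanishes n w2.
Proof.
move=> supp1 supp2; have an : a < n by lia. have bn : b < n by lia.
have ab : a != b by lia. have ba : b != a by lia.
have only_bb := supported_b_diag w1_checks an ab supp1.
have only_aa := supported_b_diag w2_checks bn ba supp2.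
have w1bb : w1 b b = false.
  by rewrite diag_shared; apply/negP => /(only_aa b b bn bn); lia.
have w2aa : w2 a a = false.
  by rewrite -diag_shared; apply/negP => /(only_bb a a an an); lia.
split=> k l kn ln; apply/negP => wkl.
  have /andP[/eqP ek /eqP el] := only_bb k l kn ln wkl.
  by move: wkl; rewrite ek el w1bb.
have /andP[/eqP ek /eqP el] := only_aa k l kn ln wkl.
by move: wkl; rewrite ek el w2aa.
Qed.

Lemma dual_mixed_vanish o : o < n - 2 ->
  supported_on n w1 o b -> supported_on n w2 o b -> vanishes n w1 /\ vanishes n w2.
Proof.
move=> o_reg supp1 supp2; have on : o < n by lia. have bn : b < n by lia.
have ob : o != b by lia.
have only_bb := supported_b_diag w1_checks on ob supp1.
have w1oo : w1 o o = false by apply/negP => /(only_bb o o on on); lia.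
have w2_0 := supported_a_vanish w2_checks o_reg supp2 (etrans (esym (diag_shared o)) w1oo).
split=> // k l kn ln; apply/negP => wkl.
have /andP[/eqP ek /eqP el] := only_bb k l kn ln wkl.
by move: wkl; rewrite ek el diag_shared w2_0.
Qed.

Lemma dual_regular_vanish i j : prime n -> i < j -> j < n - 2 ->
  supported_on n w1 i j -> supported_on n w2 i j -> vanishes n w1 /\ vanishes n w2.
Proof.
move=> n_prime ij j_reg supp1 supp2.
have d_gt0 : 0 < j - i by lia. have d_lt : j - i < n by lia.
set x := aprog n b (j - i).
have [ka ka_n xa] : exists2 ka, ka < n & x ka = a by apply: aprog_onto; lia.
have [ki ki_n xi] : exists2 ki, ki < n & x ki = i by apply: aprog_onto; lia.
(* The progression of w2 starts at a, so it is that of w1 rotated by the position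
   of a: i precedes a in one of them and follows it in the other. *)
have y_x t : aprog n a (j - i) t = x (t + ka) by rewrite /x aprogD -/x xa.
have x_period t : x (t + n) = x t by rewrite /x aprogD aprogn //; lia.
have x0 : x 0 = b by rewrite /x aprog0 //; lia.
have xn : x n = b by rewrite /x aprogn //; lia.
have ki_gt0 : 0 < ki by case: (posnP ki) xi => [-> | //]; rewrite x0; lia.
have ka_gt0 : 0 < ka by case: (posnP ka) xa => [-> | //]; rewrite x0; lia.
have yb : aprog n a (j - i) (n - ka) = b by rewrite y_x subnK // ltnW.
have [w1ii w1jj] : w1 i i = false /\ w1 j j = false.
  case: (ltngtP ki ka) => [ki_ka | ka_ki | ki_ka]; last by move: xi; rewrite ki_ka xa; lia.
  - have yi : aprog n a (j - i) (ki + n - ka) = i by rewrite y_x subnK ?x_period //; lia.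
    split; first exact: (regular_diag_i w1_checks n_prime supp1 ij j_reg ka_n xi xa ki_ka).
    rewrite diag_shared; apply: (regular_diag_j w2_checks n_prime supp2 ij j_reg _ yi yb); lia.
  - have yi : aprog n a (j - i) (ki - ka) = i by rewrite y_x subnK // ltnW.
    split; last exact: (regular_diag_j w1_checks n_prime supp1 ij j_reg ki_n xi xa ka_ki).
    rewrite diag_shared; apply: (regular_diag_i w2_checks n_prime supp2 ij j_reg _ yi yb); lia.
split; first exact: (regular_vanish w1_checks n_prime supp1 ij j_reg).
by apply: (regular_vanish w2_checks n_prime supp2 ij j_reg); rewrite -diag_shared.
Qed.

End DualWeights.

(* [orient false k l] and [orient true k l] are the paper's <v_k, v_l>^down and
   <v_k, v_l>^up. *)
Definition orient n (up : bool) (k l : 'I_n) : 'I_n * 'I_n :=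
  if (k <= l) == up then (k, l) else (l, k).

Definition weight n (up : bool) (L : labeling n.+1) (k l : nat) : bool :=
  L (orient up (inord k) (inord l)).

Section Orient.
Variables (n : nat) (up : bool).

Lemma orientC (k l : 'I_n) : orient up k l = orient up l k.
Proof.
by rewrite /orient; case: (ltngtP k l) => [_ | _ | /val_inj->]; case: up.
Qed.

Lemma orient_inj (h : 'I_n) : injective (orient up h).
Proof. by move=> l l'; rewrite /orient; do 2 case: ifP => _; case=> *; congruence. Qed.

Lemma orient_endpoints (k l : 'I_n) :
  [:: (orient up k l).1; (orient up k l).2] =i [:: k; l].
Proof. by move=> x; rewrite /orient; case: ifP => _; rewrite // !inE orbC. Qed.

End Orient.

Section Weight.
Variables (n : nat) (L : labeling n.+1).

Lemma weight_ord up (k l : 'I_n.+1) : weight up L k l = L (orient up k l).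
Proof. by rewrite /weight !inord_val. Qed.

Lemma weight_sym up k l : weight up L k l = weight up L l k.
Proof. by rewrite /weight orientC. Qed.

Lemma weight_diag k : weight false L k k = weight true L k k.
Proof. by rewrite /weight /orient leqnn. Qed.

End Weight.

Lemma is_down_orient n (e : 'I_n * 'I_n) (k l : 'I_n) :
  is_down e k l = (e == orient false k l).
Proof.
by case: e => e1 e2; rewrite /is_down /is_edge /orient; case: leqP => /=; rewrite xpair_eqE.
Qed.

Lemma is_up_orient n (e : 'I_n * 'I_n) (k l : 'I_n) :
  is_up e k l = (e == orient true k l).
Proof.
by case: e => e1 e2; rewrite /is_up /is_edge /orient; case: leqP => /=; rewrite xpair_eqE.
Qed.

Lemma S_down_orient n (h : 'I_n) :
  S_down n h = orient false h @: [set l : 'I_n | l != n - 1 :> nat].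
Proof.
apply/setP => e; rewrite inE; apply/existsP/imsetP => [[l /andP[ln]] | [l]].
  by rewrite is_down_orient => /eqP->; exists l; rewrite // inE; lia.
by rewrite inE => ln ->; exists l; rewrite is_down_orient eqxx andbT; have := ltn_ord l; lia.
Qed.

Lemma S_up_orient n (h : 'I_n) :
  S_up n h = orient true h @: [set l : 'I_n | l != n - 2 :> nat].
Proof.
apply/setP => e; rewrite inE; apply/existsP/imsetP => [[l /andP[ln]] | [l]].
  by rewrite is_up_orient => /eqP->; exists l; rewrite // inE.
by rewrite inE => ln ->; exists l; rewrite is_up_orient eqxx ln.
Qed.

Lemma D_down_orient n m :
  D_down n.+1 m = orient false (inord (n.+1 - 1)) (inord (n.+1 - 2))
                  |: [set orient false kl.1 kl.2 | kl in diag_pairs n.+1 (n.+1 - 2) m].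
Proof.
apply/setP => e; rewrite !inE orbC; congr orb.
  by rewrite -is_down_orient /is_down !inordK; [congr (is_edge e _ _) | ..]; lia.
apply/existsP/imsetP => [[k /existsP[l /and4P[kb lb klm]]] | [[k l]]].
  rewrite is_down_orient => /eqP->.
  case: (leqP k l) => kl; [exists (k, l) | exists (l, k)]; rewrite ?inE /= ?kl ?kb ?lb //.
  - by rewrite (ltnW kl) addnC klm.
  - exact: orientC.
rewrite inE /= => /and4P[_ kb lb klm] ->.
by exists k; apply/existsP; exists l; rewrite kb lb klm is_down_orient eqxx.
Qed.

Lemma D_up_orient n m :
  D_up n.+1 m = orient true (inord (n.+1 - 2)) (inord (n.+1 - 1))
                |: [set orient true kl.1 kl.2 | kl in diag_pairs n.+1 (n.+1 - 1) m].
Proof.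
apply/setP => e; rewrite !inE orbC; congr orb.
  by rewrite -is_up_orient /is_up !inordK; [congr (is_edge e _ _) | ..]; lia.
apply/existsP/imsetP => [[k /existsP[l /and4P[kb lb klm]]] | [[k l]]].
  rewrite is_up_orient => /eqP->.
  have kb' : k != n.+1 - 1 :> nat by lia. have lb' : l != n.+1 - 1 :> nat by lia.
  case: (leqP k l) => kl; [exists (k, l) | exists (l, k)]; rewrite ?inE /= ?kl ?kb' ?lb' //.
  - by rewrite (ltnW kl) addnC klm.
  - exact: orientC.
rewrite inE /= => /and4P[_ kb lb klm] ->; exists k; apply/existsP; exists l.
by rewrite klm is_up_orient eqxx andbT; have := ltn_ord k; have := ltn_ord l; lia.
Qed.

Lemma parity_row n up (L : labeling n.+1) (h : 'I_n.+1) c :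
  parity L (orient up h @: [set l : 'I_n.+1 | l != c :> nat]) = row_sum n.+1 c (weight up L) h.
Proof.
rewrite /parity big_imset /=; last by move=> l l' _ _ /orient_inj.
by apply: eq_big => [l | l _]; rewrite ?inE ?weight_ord.
Qed.

Lemma parity_diag n up (L : labeling n.+1) a b m : b < n.+1 ->
  parity L (orient up (inord a) (inord b)
            |: [set orient up kl.1 kl.2 | kl in diag_pairs n.+1 b m])
  = diag_sum n.+1 b (weight up L) m (+) weight up L a b.
Proof.
move=> bn; rewrite /parity big_setU1 /= 1?addbC.
  rewrite big_imset /=; first by congr addb; apply: eq_bigr => kl _; rewrite weight_ord.
  move=> [k l] [k' l']; rewrite !inE /= => /andP[kl _] /andP[kl' _].
  by rewrite /orient kl kl'; case: up => -[-> ->].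
apply/imsetP => -[[k l]]; rewrite inE /= => /and4P[_ kb lb _] e.
have := orient_endpoints up k l (inord b); rewrite -e orient_endpoints !inE eqxx orbT.
by rewrite -!val_eqE /= inordK // ![b == _]eq_sym (negbTE kb) (negbTE lb).
Qed.

Lemma code_checks n (Z : labeling n.+1) : 2 < n.+1 -> Z \in code_G4 n.+1 ->
  checks n.+1 (n.+1 - 1) (n.+1 - 2) (weight false Z) /\
  checks n.+1 (n.+1 - 2) (n.+1 - 1) (weight true Z).
Proof.
move=> n_gt2; rewrite inE => /and4P[/forallP Sd /forallP Dd /forallP Su /forallP Du].
have p_lt : n.+1 - 2 < n.+1 by lia. have q_lt : n.+1 - 1 < n.+1 by lia.
split; split; rewrite ?eqxx ?orbT //; try exact: weight_sym.
- move=> h h_reg; have hn : h < n.+1 by lia.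
  have /implyP := Sd (inord h); rewrite S_down_orient parity_row !inordK //.
  by move/(_ h_reg)/negbTE.
- move=> m mn; have := Dd (inord m); rewrite D_down_orient parity_diag ?inordK //.
  by move/negbTE/addb_false_eq.
- move=> h h_reg; have hn : h < n.+1 by lia.
  have /implyP := Su (inord h); rewrite S_up_orient parity_row !inordK //.
  by move/(_ h_reg)/negbTE.
move=> m mn; have := Du (inord m); rewrite D_up_orient parity_diag ?inordK //.
by move/negbTE/addb_false_eq.
Qed.

Lemma weight_supported n up (Z : labeling n.+1) (i j : 'I_n.+1) :
    (forall e, e.1 \notin [set i; j] -> e.2 \notin [set i; j] -> Z e = false) ->
  supported_on n.+1 (weight up Z) i j.
Proof.
move=> Z0 k l kn ln; apply: contraTT => /norP[ki /norP[kj /norP[li lj]]].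
have off x : x \in [:: inord k; inord l] -> x \notin [set i; j].
  by rewrite !inE => /orP[] /eqP->; rewrite -!val_eqE /= inordK // negb_or ?ki ?kj ?li ?lj.
by rewrite /weight Z0 // off // -(orient_endpoints up) !inE eqxx ?orbT.
Qed.

Lemma weights_vanish n (Z : labeling n.+1) :
  vanishes n.+1 (weight false Z) -> vanishes n.+1 (weight true Z) -> Z = [ffun=> false].
Proof.
move=> X0 Y0; apply/ffunP => -[k l]; rewrite ffunE.
case: (leqP k l) => kl.
  by have := Y0 k l (ltn_ord k) (ltn_ord l); rewrite weight_ord /orient kl.
by have := X0 k l (ltn_ord k) (ltn_ord l); rewrite weight_ord /orient leqNgt kl.
Qed.

Lemma code_pair_vanish n (Z : labeling n.+1) (i j : 'I_n.+1) :
    prime n.+1 -> 4 < n.+1 -> Z \in code_G4 n.+1 -> i < j ->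
    (forall e, e.1 \notin [set i; j] -> e.2 \notin [set i; j] -> Z e = false) ->
  Z = [ffun=> false].
Proof.
move=> n_prime n_gt4 Zc ij Z0; have n_gt2 : 2 < n.+1 by lia.
have j_lt := ltn_ord j.
have [cX cY] := code_checks n_gt2 Zc.
have diagXY k : weight false Z k k = weight true Z k k := weight_diag Z k.
have supp up : supported_on n.+1 (weight up Z) i j := weight_supported Z0.
suff [] : vanishes n.+1 (weight false Z) /\ vanishes n.+1 (weight true Z).
  exact: weights_vanish.
have [j_reg | j_sp] := ltnP j (n.+1 - 2).
  exact: (dual_regular_vanish cX cY diagXY n_prime ij j_reg (supp _) (supp _)).
have [i_reg | i_sp] := ltnP i (n.+1 - 2).
  have [ej | ej] : j = n.+1 - 2 :> nat \/ j = n.+1 - 1 :> nat by lia.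
    move: (supp false) (supp true); rewrite ej.
    exact: (dual_mixed_vanish cX cY diagXY i_reg).
  move: (supp false) (supp true); rewrite ej => sX sY.
  by have [] := dual_mixed_vanish cY cX (fun k => esym (diagXY k)) i_reg sY sX.
have Z0' : forall e, e.1 \notin [set j; i] -> e.2 \notin [set j; i] -> Z e = false.
  by rewrite setUC.
have ei : i = n.+1 - 2 :> nat by lia. have ej : j = n.+1 - 1 :> nat by lia.
move: (weight_supported (up := false) Z0') (supp true); rewrite ei ej.
exact: (dual_special_vanish cX cY diagXY).
Qed.

Definition check_index n := (('I_(n - 2) + 'I_n) + ('I_(n - 2) + 'I_n))%type.

Definition syndrome n (L : labeling n) : {ffun check_index n -> bool} :=
  [ffun t : check_index n => match t with
    | inl (inl h) => parity L (S_down n h)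
    | inl (inr m) => parity L (D_down n m)
    | inr (inl h) => parity L (S_up n h)
    | inr (inr m) => parity L (D_up n m)
    end].

Lemma parity_xorf n (L1 L2 : labeling n) S :
  parity (xorf L1 L2) S = parity L1 S (+) parity L2 S.
Proof. by rewrite /parity -big_split; apply: eq_bigr => e _; rewrite ffunE. Qed.

Lemma syndrome_xorf n (L1 L2 : labeling n) :
  syndrome (xorf L1 L2) = xorf (syndrome L1) (syndrome L2).
Proof. by apply/ffunP => -[[h|m]|[h|m]]; rewrite !ffunE parity_xorf. Qed.

Lemma code_syndrome n (L : labeling n) : (L \in code_G4 n) = (syndrome L == [ffun=> false]).
Proof.
rewrite inE; apply/and4P/eqP => [[/forallP Sd /forallP Dd /forallP Su /forallP Du] | ].
  apply/ffunP => -[[h|m]|[h|m]]; rewrite !ffunE; apply/negbTE.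
  - by have := Sd (widen_ord (leq_subr 2 n) h); rewrite /= ltn_ord.
  - exact: Dd.
  - by have := Su (widen_ord (leq_subr 2 n) h); rewrite /= ltn_ord.
  - exact: Du.
move/ffunP=> sL0; split; apply/forallP => h.
- by apply/implyP => h_reg; have := sL0 (inl (inl (Ordinal h_reg))); rewrite !ffunE => ->.
- by have := sL0 (inl (inr h)); rewrite !ffunE => ->.
- by apply/implyP => h_reg; have := sL0 (inr (inl (Ordinal h_reg))); rewrite !ffunE => ->.
- by have := sL0 (inr (inr h)); rewrite !ffunE => ->.
Qed.

Lemma code_xorf n (L1 L2 : labeling n) :
  L1 \in code_G4 n -> L2 \in code_G4 n -> xorf L1 L2 \in code_G4 n.
Proof.
rewrite !code_syndrome syndrome_xorf => /eqP-> /eqP->.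
by apply/eqP/ffunP => t; rewrite !ffunE.
Qed.

Lemma code_G4_corrects_two n :
  prime n.+1 -> 4 < n.+1 -> node_erasure_correcting (code_G4 n.+1) 2.
Proof.
move=> n_prime n_gt4 L1 L2 F L1c L2c /eqP/cards2P[i [j [ij ->]]].
wlog lt_ij : i j ij / i < j => [hwlog | agree].
  case: (ltngtP i j) => [| ji | /val_inj eij]; first exact: hwlog.
    by rewrite setUC; apply: hwlog; rewrite // eq_sym.
  by rewrite eij eqxx in ij.
apply: xorf_eq0; apply: (code_pair_vanish n_prime n_gt4 (code_xorf L1c L2c) lt_ij).
by move=> e e1 e2; rewrite ffunE agree ?addbb.
Qed.

Lemma card_code_G4 n : prime n.+1 -> 4 < n.+1 -> #|code_G4 n.+1| = 2 ^ ((n.+1 - 2) ^ 2).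
Proof.
move=> n_prime n_gt4.
pose F := [set ord0; ord_max : 'I_n.+1].
pose E := [set e : 'I_n.+1 * 'I_n.+1 | (e.1 \in F) || (e.2 \in F)].
have card_notF : #|~: F| = n.+1 - 2.
  have := cardsC F; rewrite cards2 card_ord -val_eqE /=; case: eqP; lia.
have card_notE : #|~: E| = (n.+1 - 2) ^ 2.
  have -> : ~: E = setX (~: F) (~: F) by apply/setP => e; rewrite !inE negb_or.
  by rewrite cardsX card_notF; lia.
have card_E : #|E| = #|{: check_index n.+1}|.
  by have := cardsC E; rewrite card_notE card_prod !card_sum !card_ord; lia.
have code_kernel : code_G4 n.+1 = [set L | syndrome L == [ffun=> false]].
  by apply/setP => L; rewrite code_syndrome inE.
rewrite code_kernel (card_kernel (@syndrome_xorf n.+1) _ card_E); first by rewrite -card_notE.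
move=> L sL0 L0.
have lt01 : @ord0 n < @ord_max n by rewrite /=; lia.
apply: (code_pair_vanish n_prime n_gt4 _ lt01) => [|e e1 e2].
  by rewrite code_kernel inE sL0.
by apply: L0; rewrite inE negb_or e1 e2.
Qed.

Theorem theorem3 (n : nat) (hp : prime n) (h5 : 5 <= n) :
  optimal_node_erasure_code (code_G4 n) 2 /\
  has_redundancy (code_G4 n) (4 * n - 4).
Proof.
case: n hp h5 => [//|n] n_prime n_gt4.
rewrite /optimal_node_erasure_code /has_redundancy card_code_G4 //.
split; first split; first exact: code_G4_corrects_two.
all: congr (2 ^ _); lia.
Qed.
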